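(* Let $\kappa$ be a regular cardinal. A $\kappa$-Kurepa tree exists if and only if there exists a $(\kappa,\kappa)$-connected graph of size $\kappa$ which has a $\kappa$-Kurepa minor family of size at least $\kappa^+$.
   Context: A tree is a poset in which the set of predecessors of each element is well-ordered; the $\alpha$-th level is the set of nodes whose set of predecessors has order type $\alpha$, and the height of the tree is the least $\alpha$ with empty $\alpha$-th level. A branch is a maximal chain. A $\kappa$-Kurepa tree is a tree of height $\kappa$ with at least $\kappa^+$ different branches (of length $\kappa$) and all levels of size less than $\kappa$. A graph is a pair $(V,E)$ with $E\subseteq[V]^2$; its size is $|V|$. For infinite cardinals $\kappa,\lambda$, a graph is $(\kappa,\lambda)$-connected if after the removal of any set of fewer than $\kappa$ vertices, the number of connected components of the remaining graph is non-zero and less than $\lambda$. A $K_\kappa$ minor of $G$ is a family of $\kappa$ pairwise disjoint non-empty vertex sets of $G$, each inducing a connected subgraph, such that any two of them are joined by an edge of $G$; we identify it with the union of its sets when speaking about separation. For vertex sets $X,Y,S$, $S$ separates $X$ from $Y$ in $G$ if after removing $S$, $X\setminus S$ and $Y\setminus S$ lie in different components. A family $\{W_\alpha:\alpha<\lambda\}$ of $K_\kappa$ minors of $G$ is a $\kappa$-Kurepa minor family of size $\lambda$ if for all $\alpha\neq\beta$ some set of fewer than $\kappa$ vertices separates $W_\alpha$ from $W_\beta$ in $G$. *)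

(* Sets are predicates X : T -> Prop; cardinal comparisons
   are via injections/bijections (classical, with choice, this is the
   usual cardinal order). *)
From Stdlib Require Import Relations Relation_Operators Wellfounded.

Definition inj_le (A B : Type) : Prop :=
  exists f : A -> B, forall x y, f x = f y -> x = y.

Definition card_lt (A B : Type) : Prop := inj_le A B /\ ~ inj_le B A.

Definition equipotent (A B : Type) : Prop :=
  exists (f : A -> B) (g : B -> A),
    (forall x, g (f x) = x) /\ (forall y, f (g y) = y).

Definition ord_iso (A : Type) (ra : A -> A -> Prop)
                   (B : Type) (rb : B -> B -> Prop) : Prop :=
  exists (f : A -> B) (g : B -> A),
    (forall x, g (f x) = x) /\ (forall y, f (g y) = y) /\
    (forall x y, ra x y <-> rb (f x) (f y)).

Definition sub_rel {T : Type} (r : T -> T -> Prop) (P : T -> Prop)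
  : {x | P x} -> {x | P x} -> Prop :=
  fun x y => r (proj1_sig x) (proj1_sig y).

Definition strict_well_order (K : Type) (lt : K -> K -> Prop) : Prop :=
  (forall a, ~ lt a a) /\
  (forall a b c, lt a b -> lt b c -> lt a c) /\
  (forall a b, lt a b \/ a = b \/ lt b a) /\
  well_founded lt.

(** (K, lt) is (the well-order of) a regular infinite cardinal kappa:
    an infinite initial ordinal (every proper initial segment has
    smaller cardinality) such that every subset of size < kappa is
    bounded (cofinality kappa). *)
Definition regular_cardinal (K : Type) (lt : K -> K -> Prop) : Prop :=
  strict_well_order K lt /\
  inj_le nat K /\
  (forall a : K, card_lt {b | lt b a} K) /\
  (forall A : K -> Prop, card_lt {a | A a} K ->
     exists b, forall a, A a -> lt a b).

Definition well_ordered_set {T : Type} (lt : T -> T -> Prop) (P : T -> Prop) : Prop :=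
  (forall x y, P x -> P y -> x = y \/ lt x y \/ lt y x) /\
  (forall Q : T -> Prop, (forall x, Q x -> P x) -> (exists x, Q x) ->
     exists m, Q m /\ forall x, Q x -> x = m \/ lt m x).

Definition is_tree (T : Type) (lt : T -> T -> Prop) : Prop :=
  (forall a, ~ lt a a) /\
  (forall a b c, lt a b -> lt b c -> lt a c) /\
  (forall t, well_ordered_set lt (fun s => lt s t)).

(** t lies on level alpha (alpha an element of K, i.e. an ordinal < kappa):
    its predecessor set has order type alpha. *)
Definition on_level {T : Type} (lt : T -> T -> Prop) {K : Type} (ltK : K -> K -> Prop)
  (a : K) (t : T) : Prop :=
  ord_iso {s | lt s t} (sub_rel lt (fun s => lt s t))
          {b | ltK b a} (sub_rel ltK (fun b => ltK b a)).

Definition on_level_kappa {T : Type} (lt : T -> T -> Prop) (K : Type) (ltK : K -> K -> Prop)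
  (t : T) : Prop :=
  ord_iso {s | lt s t} (sub_rel lt (fun s => lt s t)) K ltK.

Definition is_chain {T : Type} (lt : T -> T -> Prop) (C : T -> Prop) : Prop :=
  forall x y, C x -> C y -> x = y \/ lt x y \/ lt y x.

Definition is_branch {T : Type} (lt : T -> T -> Prop) (C : T -> Prop) : Prop :=
  is_chain lt C /\
  forall D, is_chain lt D -> (forall x, C x -> D x) -> forall x, D x -> C x.

Definition kurepa_tree (K : Type) (ltK : K -> K -> Prop)
  (T : Type) (lt : T -> T -> Prop) : Prop :=
  is_tree T lt /\
  (* height kappa: levels alpha < kappa nonempty, level kappa empty *)
  (forall a : K, exists t, on_level lt ltK a t) /\
  (forall t, ~ on_level_kappa lt K ltK t) /\
  (forall a : K, card_lt {t | on_level lt ltK a t} K) /\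
  (* at least kappa^+ branches of length kappa *)
  ~ inj_le {C : T -> Prop | is_branch lt C /\
                             ord_iso {x | C x} (sub_rel lt C) K ltK} K.

Definition simple_graph (V : Type) (E : V -> V -> Prop) : Prop :=
  (forall u v, E u v -> E v u) /\ (forall v, ~ E v v).

Definition rel_in {V : Type} (E : V -> V -> Prop) (X : V -> Prop) : V -> V -> Prop :=
  fun a b => X a /\ X b /\ E a b.

Definition connected_in {V : Type} (E : V -> V -> Prop) (X : V -> Prop) (u v : V) : Prop :=
  clos_refl_trans V (rel_in E X) u v.

Definition components {V : Type} (E : V -> V -> Prop) (S : V -> Prop) : Type :=
  {C : V -> Prop | exists v, ~ S v /\
     C = (fun u => ~ S u /\ connected_in E (fun w => ~ S w) v u)}.

Definition kl_connected (K L : Type) (V : Type) (E : V -> V -> Prop) : Prop :=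
  forall S : V -> Prop, card_lt {v | S v} K ->
    inhabited (components E S) /\ card_lt (components E S) L.

Definition K_minor (K : Type) {V : Type} (E : V -> V -> Prop) (W : K -> V -> Prop) : Prop :=
  (forall a b, a <> b -> forall v, ~ (W a v /\ W b v)) /\
  (forall a, exists v, W a v) /\
  (forall a u v, W a u -> W a v -> connected_in E (W a) u v) /\
  (forall a b, a <> b -> exists u v, W a u /\ W b v /\ E u v).

Definition minor_union {K V : Type} (W : K -> V -> Prop) : V -> Prop :=
  fun v => exists a, W a v.

Definition separates {V : Type} (E : V -> V -> Prop) (S X Y : V -> Prop) : Prop :=
  forall x y, X x -> ~ S x -> Y y -> ~ S y ->
    ~ connected_in E (fun w => ~ S w) x y.

Definition kurepa_minor_family (K : Type) {V : Type} (E : V -> V -> Prop)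
  (I : Type) (F : I -> K -> V -> Prop) : Prop :=
  (forall i, K_minor K E (F i)) /\
  (forall i j, i <> j -> exists S : V -> Prop,
     card_lt {v | S v} K /\ separates E S (minor_union (F i)) (minor_union (F j))).

(* A kappa-Kurepa tree gives the graph on its nodes in which comparable nodes are
   adjacent.  It has size kappa and is (kappa,kappa)-connected: fewer than kappa
   vertices lie below some level alpha, and every component of the rest contains
   a node of level alpha.  Each kappa-branch is a K_kappa minor with singleton
   branch sets, and two branches are separated by the predecessors of the first
   node of one that is not on the other.

   Conversely, enumerate the vertices in order type kappa and let the nodes of
   level alpha be the components of the graph minus its first alpha vertices,
   ordered by reverse inclusion; (kappa,kappa)-connectivity makes this a tree of
   height kappa with small levels.  At each level, all but fewer than kappa branch
   sets of a K_kappa minor lie in one component, so the minor determines a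
   kappa-branch, and separated minors determine different branches. *)

From Stdlib Require Import Classical ClassicalEpsilon FunctionalExtensionality.
From Stdlib Require Import PropExtensionality ProofIrrelevance Relation_Operators Wellfounded.

Lemma proj1_sig_inj {A} {P : A -> Prop} (x y : {a | P a}) :
  proj1_sig x = proj1_sig y -> x = y.
Proof.
  destruct x as [x px], y as [y py]; simpl; intros ->.
  f_equal; apply proof_irrelevance.
Qed.

Lemma inj_le_trans A B C : inj_le A B -> inj_le B C -> inj_le A C.
Proof. intros [f Hf] [g Hg]; exists (fun x => g (f x)); auto. Qed.

Lemma inj_le_sig {A} (P : A -> Prop) : inj_le {a | P a} A.
Proof. exists (@proj1_sig _ _); apply proj1_sig_inj. Qed.

Lemma inj_le_equipotent A B : equipotent A B -> inj_le A B.
Proof.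
  intros [f [g [Hgf _]]]; exists f; intros x y E.
  now rewrite <- (Hgf x), <- (Hgf y), E.
Qed.

Lemma not_inj_le_mono K X Y : inj_le X Y -> ~ inj_le K Y -> ~ inj_le K X.
Proof. intros HXY HY HX; apply HY; eapply inj_le_trans; eauto. Qed.

Lemma card_lt_mono K X Y : inj_le X Y -> card_lt Y K -> card_lt X K.
Proof.
  intros HXY [HYK HKY]; split.
  - eapply inj_le_trans; eauto.
  - eapply not_inj_le_mono; eauto.
Qed.

Lemma not_inj_le_image K X Y (f : X -> Y) :
  ~ inj_le K X -> ~ inj_le K {y | exists x, f x = y}.
Proof.
  intros HX [h Hh]; apply HX.
  destruct (choice (fun (y : {y | exists x, f x = y}) x => f x = proj1_sig y))
    as [s Hs].
  { intros [y [x Hx]]; exists x; exact Hx. }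
  exists (fun k => s (h k)); intros k k' E; apply Hh, proj1_sig_inj.
  now rewrite <- (Hs (h k)), <- (Hs (h k')), E.
Qed.

Lemma well_founded_minimal {A} (R : A -> A -> Prop) (P : A -> Prop) :
  well_founded R -> (exists x, P x) -> exists m, P m /\ forall x, P x -> ~ R x m.
Proof.
  intros W [x Px]; apply NNPP; intros HN; revert x Px.
  apply (well_founded_ind W (fun x => ~ P x)); intros x IH Px.
  apply HN; exists x; split; [exact Px|].
  intros y Py Ryx; exact (IH y Ryx Py).
Qed.

Section LevelMaps.

Context {T K : Type} (lt : T -> T -> Prop) (ltK : K -> K -> Prop).

(* [on_level] presented by a total function [rho : T -> K] instead of a bijection
   between subtypes. *)
Definition level_map (rho : T -> K) (t : T) (a : K) : Prop :=
  (forall s, lt s t -> ltK (rho s) a) /\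
  (forall k, ltK k a -> exists s, lt s t /\ rho s = k) /\
  (forall s s', lt s t -> lt s' t -> (lt s s' <-> ltK (rho s) (rho s'))) /\
  (forall s s', lt s t -> lt s' t -> rho s = rho s' -> s = s').

Lemma on_level_of_level_map rho t a : level_map rho t a -> on_level lt ltK a t.
Proof.
  intros (Hin & Hsurj & Hord & Hinj).
  destruct (choice (fun (b : {b | ltK b a}) (s : {s | lt s t}) =>
                      rho (proj1_sig s) = proj1_sig b)) as [g Hg].
  { intros [b Hb]; destruct (Hsurj b Hb) as [s [Hs E]]; exists (exist _ s Hs); exact E. }
  exists (fun s => exist (fun b => ltK b a) (rho (proj1_sig s)) (Hin _ (proj2_sig s))), g.
  split; [|split].
  - intros s; apply proj1_sig_inj, Hinj; [apply (proj2_sig (g _)) | apply (proj2_sig s) |].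
    simpl; rewrite Hg; reflexivity.
  - intros b; apply proj1_sig_inj, Hg.
  - intros x y; apply Hord; [apply (proj2_sig x) | apply (proj2_sig y)].
Qed.

Lemma level_map_of_on_level t a :
  inhabited K -> on_level lt ltK a t -> exists rho, level_map rho t a.
Proof.
  intros inh [f [g [Hgf [Hfg Hord]]]].
  set (rho s := epsilon inh (fun k => exists p : lt s t, proj1_sig (f (exist _ s p)) = k)).
  assert (Hrho : forall s (p : lt s t), rho s = proj1_sig (f (exist _ s p))).
  { intros s p; unfold rho.
    destruct (epsilon_spec inh (fun k => exists p : lt s t, proj1_sig (f (exist _ s p)) = k))
      as [p' E]; [exists (proj1_sig (f (exist _ s p))), p; reflexivity|].
    rewrite <- E; replace p' with p by apply proof_irrelevance; reflexivity. }
  exists rho; split; [|split; [|split]].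
  - intros s p; rewrite (Hrho s p); apply (proj2_sig (f _)).
  - intros k Hk; set (s := g (exist _ k Hk)).
    exists (proj1_sig s); split; [apply (proj2_sig s)|].
    rewrite (Hrho _ (proj2_sig s)).
    replace (exist _ (proj1_sig s) (proj2_sig s)) with s by (apply proj1_sig_inj; reflexivity).
    unfold s; rewrite Hfg; reflexivity.
  - intros s s' p p'; rewrite (Hrho s p), (Hrho s' p').
    exact (Hord (exist _ s p) (exist _ s' p')).
  - intros s s' p p' E; rewrite (Hrho s p), (Hrho s' p') in E.
    apply proj1_sig_inj, (f_equal g) in E; rewrite !Hgf in E.
    exact (f_equal (@proj1_sig _ _) E).
Qed.

Lemma level_map_below rho t a b :
  (forall x y z, lt x y -> lt y z -> lt x z) ->
  (forall x y z, ltK x y -> ltK y z -> ltK x z) ->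
  level_map rho t b -> ltK a b -> exists s, lt s t /\ level_map rho s a.
Proof.
  intros Tr TrK (Hin & Hsurj & Hord & Hinj) Hab.
  destruct (Hsurj a Hab) as [s [Hs E]]; exists s; split; [exact Hs|].
  split; [|split; [|split]].
  - intros u Hu; rewrite <- E; apply Hord; eauto.
  - intros k Hk; destruct (Hsurj k (TrK _ _ _ Hk Hab)) as [u [Hu Eu]].
    exists u; split; [apply Hord; [exact Hu | exact Hs | rewrite Eu, E; exact Hk] | exact Eu].
  - intros u u' Hu Hu'; apply Hord; eauto.
  - intros u u' Hu Hu'; apply Hinj; eauto.
Qed.

End LevelMaps.

Section RegularCardinal.

Variables (K : Type) (ltK : K -> K -> Prop).
Hypothesis RK : regular_cardinal K ltK.

Lemma regular_irrefl a : ~ ltK a a.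
Proof. apply RK. Qed.

Lemma regular_trans a b c : ltK a b -> ltK b c -> ltK a c.
Proof. apply RK. Qed.

Lemma regular_trichotomy a b : ltK a b \/ a = b \/ ltK b a.
Proof. apply RK. Qed.

Lemma regular_wf : well_founded ltK.
Proof. apply RK. Qed.

Lemma regular_inhabited : inhabited K.
Proof. destruct RK as (_ & [f _] & _); exact (inhabits (f 0)). Qed.

Lemma segment_not_inj_le a : ~ inj_le K {b | ltK b a}.
Proof. apply RK. Qed.

Lemma segment_card_lt a : card_lt {b | ltK b a} K.
Proof. split; [apply inj_le_sig | apply segment_not_inj_le]. Qed.

Lemma regular_bounded X (g : X -> K) :
  ~ inj_le K X -> exists b, forall x, ltK (g x) b.
Proof.
  intros HX; destruct RK as (_ & _ & _ & Hcof).
  destruct (Hcof (fun k => exists x, g x = k)) as [b Hb].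
  - split; [apply inj_le_sig | now apply not_inj_le_image].
  - exists b; intros x; apply Hb; eauto.
Qed.

Lemma regular_unbounded a : exists c, ltK a c.
Proof.
  assert (Hunit : ~ inj_le K unit).
  { intros HKu; destruct RK as (_ & HnK & _).
    destruct (inj_le_trans _ _ _ HnK HKu) as [h Hh].
    assert (E : h 0 = h 1) by (destruct (h 0), (h 1); reflexivity).
    discriminate (Hh _ _ E). }
  destruct (regular_bounded unit (fun _ => a) Hunit) as [c Hc].
  exists c; exact (Hc tt).
Qed.

Lemma regular_bounded_union_small Y (pi : Y -> K) c :
  (forall y, ltK (pi y) c) -> (forall b, ~ inj_le K {y | pi y = b}) -> ~ inj_le K Y.
Proof.
  intros Hc Hfib [h Hh].
  assert (Hb : forall b, exists d, forall k, pi (h k) = b -> ltK k d).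
  { intros b; destruct RK as (_ & _ & _ & Hcof).
    destruct (Hcof (fun k => pi (h k) = b)) as [d Hd]; [|exists d; exact Hd].
    split; [apply inj_le_sig|]; intros Hk; apply (Hfib b).
    eapply inj_le_trans; [exact Hk|].
    exists (fun k : {k | pi (h k) = b} =>
              exist (fun y => pi y = b) (h (proj1_sig k)) (proj2_sig k)).
    intros x y E; apply proj1_sig_inj, Hh; exact (f_equal (@proj1_sig _ _) E). }
  destruct (choice _ Hb) as [beta Hbeta].
  destruct (regular_bounded {b | ltK b c} (fun b => beta (proj1_sig b)) (segment_not_inj_le c))
    as [d Hd].
  apply (regular_irrefl d), regular_trans with (beta (pi (h d))); [apply Hbeta; reflexivity|].
  exact (Hd (exist _ (pi (h d)) (Hc (h d)))).
Qed.

Lemma regular_no_descent (sigma : K -> K) b :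
  (forall x y, ltK x b -> ltK y b -> ltK x y -> ltK (sigma x) (sigma y)) ->
  forall x, ltK x b -> ~ ltK (sigma x) x.
Proof.
  intros Hincr x; induction x as [x IH] using (well_founded_ind regular_wf).
  intros Hxb Hdown; apply (IH (sigma x) Hdown); [eapply regular_trans; eauto|].
  apply Hincr; [eapply regular_trans; eauto | exact Hxb | exact Hdown].
Qed.

Lemma level_map_not_lt {T} (lt : T -> T -> Prop) rho1 rho2 t a b :
  level_map lt ltK rho1 t a -> level_map lt ltK rho2 t b -> ~ ltK a b.
Proof.
  intros (Hin1 & _ & Hord1 & _) (_ & Hsurj2 & Hord2 & _) Hab.
  set (sel k := epsilon (inhabits t) (fun s => lt s t /\ rho2 s = k)).
  assert (Hsel : forall k, ltK k b -> lt (sel k) t /\ rho2 (sel k) = k)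
    by (intros k Hk; apply epsilon_spec, Hsurj2, Hk).
  apply (regular_no_descent (fun k => rho1 (sel k)) b) with a;
    [| exact Hab | apply Hin1, Hsel, Hab].
  intros x y Hx Hy Hxy; destruct (Hsel x Hx) as [Px Ex], (Hsel y Hy) as [Py Ey].
  apply Hord1, Hord2; [exact Px | exact Py | exact Px | exact Py | rewrite Ex, Ey; exact Hxy].
Qed.

Lemma on_level_unique {T} (lt : T -> T -> Prop) t a b :
  on_level lt ltK a t -> on_level lt ltK b t -> a = b.
Proof.
  intros Ha Hb.
  destruct (level_map_of_on_level lt ltK t a regular_inhabited Ha) as [rho1 L1].
  destruct (level_map_of_on_level lt ltK t b regular_inhabited Hb) as [rho2 L2].
  destruct (regular_trichotomy a b) as [H|[H|H]]; [exfalso | exact H | exfalso].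
  - exact (level_map_not_lt lt rho1 rho2 t a b L1 L2 H).
  - exact (level_map_not_lt lt rho2 rho1 t b a L2 L1 H).
Qed.

(* The rank of [x] is the least element of [K] not taken by its predecessors. *)
Lemma small_segments_rank A (R : A -> A -> Prop) :
  well_founded R -> (forall x, ~ inj_le K {y | R y x}) ->
  exists h : A -> K, forall x,
    (forall y, R y x -> h y <> h x) /\
    (forall k, ltK k (h x) -> exists y, R y x /\ h y = k).
Proof.
  intros W Hsmall; pose proof regular_inhabited as inh.
  set (F x (g : forall y, R y x -> K) := epsilon inh (fun k =>
         (~ exists y (p : R y x), g y p = k) /\
         forall k', ltK k' k -> exists y (p : R y x), g y p = k')).
  set (h := Fix W (fun _ => K) F).
  assert (Hunfold : forall x, h x = F x (fun y _ => h y)).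
  { intros x; apply (Fix_eq W (fun _ => K) F); intros x0 g1 g2 Hg.
    replace g1 with g2; [reflexivity|].
    apply functional_extensionality_dep; intros y.
    apply functional_extensionality_dep; intros p; symmetry; apply Hg. }
  exists h; intros x; rewrite Hunfold; unfold F at 1 2.
  match goal with |- context [epsilon inh ?P] => destruct (epsilon_spec inh P) as [Hnew Hdown] end.
  - destruct (well_founded_minimal ltK (fun k => ~ exists y (p : R y x), h y = k) regular_wf)
      as [m [Hm Hmin]].
    + apply NNPP; intros Hall; apply (Hsmall x).
      assert (Hcov : forall k, exists y : {y | R y x}, h (proj1_sig y) = k).
      { intros k; apply NNPP; intros Hk; apply Hall; exists k.
        intros [y [p E]]; apply Hk; exists (exist _ y p); exact E. }
      destruct (choice _ Hcov) as [c Hc]; exists c; intros k1 k2 E.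
      now rewrite <- (Hc k1), <- (Hc k2), E.
    + exists m; split; [exact Hm|].
      intros k' Hk'; apply NNPP; intros HN; exact (Hmin k' HN Hk').
  - split.
    + intros y Ry Ey; apply Hnew; exists y, Ry; exact Ey.
    + intros k' Hk'; destruct (Hdown k' Hk') as [y [p Ey]]; exists y; split; assumption.
Qed.

Lemma equipotent_of_small_segments A (R : A -> A -> Prop) :
  well_founded R -> (forall x y, R x y \/ x = y \/ R y x) ->
  (forall x, ~ inj_le K {y | R y x}) -> inj_le K A -> equipotent A K.
Proof.
  intros W Tri Hsmall HKA.
  destruct (small_segments_rank A R W Hsmall) as [h Hh].
  assert (Hinj : forall x y, h x = h y -> x = y).
  { intros x y E; destruct (Tri x y) as [H|[H|H]]; [exfalso | exact H | exfalso].
    - exact (proj1 (Hh y) x H E).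
    - exact (proj1 (Hh x) y H (eq_sym E)). }
  assert (Hsurj : forall k, exists x, h x = k).
  { apply NNPP; intros HN.
    destruct (well_founded_minimal ltK (fun k => ~ exists x, h x = k) regular_wf)
      as [k0 [H0 Hmin]]; [apply not_all_ex_not, HN|].
    assert (Hbelow : forall x, ltK (h x) k0).
    { intros x; destruct (regular_trichotomy (h x) k0) as [H|[H|H]]; [exact H | |];
        exfalso; apply H0; [eauto|].
      destruct (proj2 (Hh x) k0 H) as [y [_ Ey]]; eauto. }
    apply (segment_not_inj_le k0); eapply inj_le_trans; [exact HKA|].
    exists (fun x => exist (fun b => ltK b k0) (h x) (Hbelow x)).
    intros x y E; apply Hinj; exact (f_equal (@proj1_sig _ _) E). }
  destruct (choice _ Hsurj) as [g Hg].
  exists h, g; split; [intros x; apply Hinj, Hg | exact Hg].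
Qed.

End RegularCardinal.

Section Connectivity.

Context {V : Type} (E : V -> V -> Prop).

Lemma connected_in_refl X u : connected_in E X u u.
Proof. apply rt_refl. Qed.

Lemma connected_in_trans X u v w :
  connected_in E X u v -> connected_in E X v w -> connected_in E X u w.
Proof. apply rt_trans. Qed.

Lemma connected_in_edge (X : V -> Prop) u v : X u -> X v -> E u v -> connected_in E X u v.
Proof. intros; apply rt_step; repeat split; assumption. Qed.

Lemma connected_in_sym X u v :
  (forall a b, E a b -> E b a) -> connected_in E X u v -> connected_in E X v u.
Proof.
  intros Hsym H; induction H as [u v (Hu & Hv & Huv)| |];
    [| apply rt_refl | eapply rt_trans; eauto].
  apply connected_in_edge; auto.
Qed.

Lemma connected_in_mono (X Y : V -> Prop) u v :
  (forall x, X x -> Y x) -> connected_in E X u v -> connected_in E Y u v.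
Proof.
  intros HXY H; induction H as [u v (Hu & Hv & Huv)| |];
    [| apply rt_refl | eapply rt_trans; eauto].
  apply connected_in_edge; auto.
Qed.

Lemma connected_in_closed (X : V -> Prop) u v : connected_in E X u v -> X u -> X v.
Proof. intros H; induction H as [x y (Hx & Hy & Hxy)| |]; auto. Qed.

Lemma components_eq_of_common S (C1 C2 : components E S) r :
  (forall a b, E a b -> E b a) -> proj1_sig C1 r -> proj1_sig C2 r -> C1 = C2.
Proof.
  destruct C1 as [C1 [v1 [S1 E1]]], C2 as [C2 [v2 [S2 E2]]]; simpl.
  intros Hsym H1 H2; apply proj1_sig_inj; simpl; subst C1 C2.
  destruct H1 as [_ H1], H2 as [_ H2].
  apply functional_extensionality; intros u; apply propositional_extensionality.
  split; intros [Hu Hc]; split; auto; eapply connected_in_trans; eauto;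
    eapply connected_in_trans; eauto; apply connected_in_sym; assumption.
Qed.

End Connectivity.

Lemma branch_down_closed {T} (lt : T -> T -> Prop) C t s :
  is_tree T lt -> is_branch lt C -> C t -> lt s t -> C s.
Proof.
  intros (_ & Htr & Hwo) [Hchain Hmax] Ct Hst.
  apply (Hmax (fun x => C x \/ x = s)); [| intros x Hx; left; exact Hx | right; reflexivity].
  assert (Hs : forall x, C x -> x = s \/ lt x s \/ lt s x).
  { intros x Hx; destruct (Hchain x t Hx Ct) as [->|[H|H]].
    - right; right; exact Hst.
    - apply (proj1 (Hwo t)); assumption.
    - right; right; eapply Htr; eauto. }
  intros x y [Hx|Ex] [Hy|Ey].
  - apply Hchain; assumption.
  - rewrite Ey; apply Hs, Hx.
  - rewrite Ex; destruct (Hs y Hy) as [H|[H|H]]; auto.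
  - left; congruence.
Qed.

Section ComparabilityGraph.

Variables (K : Type) (ltK : K -> K -> Prop) (T : Type) (lt : T -> T -> Prop).
Hypothesis RK : regular_cardinal K ltK.
Hypothesis T_tree : is_tree T lt.
Hypothesis level_nonempty : forall a, exists t, on_level lt ltK a t.
Hypothesis level_small : forall a, card_lt {t | on_level lt ltK a t} K.

Definition level_node : Type := {t : T | exists a, on_level lt ltK a t}.

Definition node_level (v : level_node) : K :=
  epsilon (regular_inhabited K ltK RK) (fun a => on_level lt ltK a (proj1_sig v)).

Definition comparable (x y : level_node) : Prop :=
  lt (proj1_sig x) (proj1_sig y) \/ lt (proj1_sig y) (proj1_sig x).

Lemma node_level_spec v : on_level lt ltK (node_level v) (proj1_sig v).
Proof. unfold node_level; apply epsilon_spec, (proj2_sig v). Qed.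

Lemma node_level_eq v a : on_level lt ltK a (proj1_sig v) -> node_level v = a.
Proof.
  intros Ha; apply (on_level_unique K ltK RK lt (proj1_sig v)); [apply node_level_spec | exact Ha].
Qed.

Lemma node_at_level a : exists v, node_level v = a.
Proof.
  destruct (level_nonempty a) as [t Ht].
  exists (exist _ t (ex_intro _ a Ht)); apply node_level_eq, Ht.
Qed.

Lemma level_fiber_small a : ~ inj_le K {v | node_level v = a}.
Proof.
  apply (not_inj_le_mono _ _ {t | on_level lt ltK a t}); [|apply level_small].
  exists (fun v => exist (fun t => on_level lt ltK a t) (proj1_sig (proj1_sig v))
    (eq_ind _ (fun b => on_level lt ltK b _) (node_level_spec _) _ (proj2_sig v))).
  intros x y E'; apply proj1_sig_inj, proj1_sig_inj; exact (f_equal (@proj1_sig _ _) E').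
Qed.

Lemma below_level_small c : ~ inj_le K {v | ltK (node_level v) c}.
Proof.
  apply (regular_bounded_union_small K ltK RK _ (fun v => node_level (proj1_sig v)) c);
    [intros v; exact (proj2_sig v)|].
  intros b; apply (not_inj_le_mono _ _ {v | node_level v = b}); [|apply level_fiber_small].
  exists (fun y => exist (fun v => node_level v = b) (proj1_sig (proj1_sig y)) (proj2_sig y)).
  intros x y E'; apply proj1_sig_inj, proj1_sig_inj; exact (f_equal (@proj1_sig _ _) E').
Qed.

Lemma level_indexing : exists idx : level_node -> K,
  forall x y, node_level x = node_level y -> idx x = idx y -> x = y.
Proof.
  assert (Hinj : forall a, exists h : T -> K, forall t t',
             on_level lt ltK a t -> on_level lt ltK a t' -> h t = h t' -> t = t').
  { intros a; destruct (proj1 (level_small a)) as [h0 Hh0].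
    destruct (regular_inhabited K ltK RK) as [k0].
    exists (fun t => match excluded_middle_informative (on_level lt ltK a t) with
                     | left p => h0 (exist _ t p) | right _ => k0 end).
    intros t t' Ht Ht'.
    destruct (excluded_middle_informative (on_level lt ltK a t)) as [p|]; [|contradiction].
    destruct (excluded_middle_informative (on_level lt ltK a t')) as [p'|]; [|contradiction].
    intros E'; apply Hh0 in E'; exact (f_equal (@proj1_sig _ _) E'). }
  destruct (choice _ Hinj) as [h Hh].
  exists (fun v => h (node_level v) (proj1_sig v)); intros x y Exy E'.
  apply proj1_sig_inj, (Hh (node_level x));
    [apply node_level_spec | rewrite Exy; apply node_level_spec |].
  rewrite E', Exy; reflexivity.
Qed.

(* Nodes are well-ordered lexicographically by (level, index within the level);
   every proper initial segment lies below some level, hence is small. *)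
Lemma level_nodes_equipotent : equipotent level_node K.
Proof.
  destruct level_indexing as [idx Hidx].
  set (R x y := ltK (node_level x) (node_level y) \/
                (node_level x = node_level y /\ ltK (idx x) (idx y))).
  apply (equipotent_of_small_segments K ltK RK level_node R).
  - apply wf_incl with
      (fun x y => slexprod K K ltK ltK (node_level x, idx x) (node_level y, idx y)).
    + intros x y [H|[E' H]]; [apply left_slex, H | rewrite E'; apply right_slex, H].
    + apply wf_inverse_image, wf_slexprod; apply (regular_wf K ltK RK).
  - intros x y; destruct (regular_trichotomy K ltK RK (node_level x) (node_level y)) as [H|[H|H]].
    + left; left; exact H.
    + destruct (regular_trichotomy K ltK RK (idx x) (idx y)) as [H'|[H'|H']].
      * left; right; split; assumption.
      * right; left; apply Hidx; assumption.
      * right; right; right; split; [symmetry|]; assumption.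
    + right; right; left; exact H.
  - intros x; destruct (regular_unbounded K ltK RK (node_level x)) as [c Hc].
    apply (not_inj_le_mono _ _ {v | ltK (node_level v) c}); [|apply below_level_small].
    assert (Hy : forall y : {y | R y x}, ltK (node_level (proj1_sig y)) c).
    { intros [y Hyx]; simpl.
      destruct Hyx as [H|[H _]]; [eapply (regular_trans K ltK RK); eauto | rewrite H; exact Hc]. }
    exists (fun y => exist (fun v => ltK (node_level v) c) (proj1_sig y) (Hy y)).
    intros y1 y2 E'; apply proj1_sig_inj; exact (f_equal (@proj1_sig _ _) E').
  - destruct (choice (fun a v => node_level v = a) node_at_level) as [nd Hnd].
    exists nd; intros a b E'; rewrite <- (Hnd a), <- (Hnd b), E'; reflexivity.
Qed.

Lemma comparable_sym x y : comparable x y -> comparable y x.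
Proof. intros [H|H]; [right | left]; exact H. Qed.

Lemma comparable_simple : simple_graph level_node comparable.
Proof. split; [exact comparable_sym | intros v [H|H]; exact (proj1 T_tree _ H)]. Qed.

Lemma node_below v a : ltK a (node_level v) ->
  exists w, lt (proj1_sig w) (proj1_sig v) /\ node_level w = a.
Proof.
  intros Ha.
  destruct (level_map_of_on_level lt ltK _ _ (regular_inhabited K ltK RK) (node_level_spec v))
    as [rho Hrho].
  destruct (level_map_below lt ltK rho _ _ _ (proj1 (proj2 T_tree)) (regular_trans K ltK RK)
              Hrho Ha) as [s [Hs Ls]].
  apply on_level_of_level_map in Ls.
  exists (exist _ s (ex_intro _ a Ls)); split; [exact Hs | apply node_level_eq, Ls].
Qed.

(* Every component of [G - S] reaches down to the first level above [S]. *)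
Lemma comparable_kl_connected : kl_connected K K level_node comparable.
Proof.
  intros S [_ HS].
  destruct (regular_bounded K ltK RK _ (fun v : {v | S v} => node_level (proj1_sig v)) HS)
    as [al Hal].
  assert (Hfree : forall v, ~ ltK (node_level v) al -> ~ S v)
    by (intros v Hv Sv; exact (Hv (Hal (exist _ v Sv)))).
  destruct (regular_unbounded K ltK RK al) as [c Hc].
  assert (Hlow : forall C : components comparable S,
             exists r, proj1_sig C r /\ ltK (node_level r) c).
  { intros [C [v [Sv EC]]]; simpl; subst C.
    destruct (classic (ltK (node_level v) c)) as [Hv|Hv].
    - exists v; split; [split; [exact Sv | apply connected_in_refl] | exact Hv].
    - assert (Hav : ltK al (node_level v)).
      { destruct (regular_trichotomy K ltK RK (node_level v) c) as [H|[H|H]];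
          [contradiction | rewrite H; exact Hc | eapply (regular_trans K ltK RK); eauto]. }
      destruct (node_below v al Hav) as [r [Hr <-]].
      assert (Sr : ~ S r) by (apply Hfree, (regular_irrefl K ltK RK)).
      exists r; split; [split; [exact Sr|] | exact Hc].
      apply connected_in_edge; [exact Sv | exact Sr | right; exact Hr]. }
  destruct (choice _ Hlow) as [r Hr].
  split.
  - destruct (node_at_level al) as [v Hv].
    constructor; exists (fun u => ~ S u /\ connected_in comparable (fun w => ~ S w) v u), v.
    split; [apply Hfree; rewrite Hv; apply (regular_irrefl K ltK RK) | reflexivity].
  - apply (card_lt_mono _ _ {v | ltK (node_level v) c}).
    + exists (fun C => exist (fun v => ltK (node_level v) c) (r C) (proj2 (Hr C))).
      intros C1 C2 E'; apply (f_equal (@proj1_sig _ _)) in E'; simpl in E'.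
      apply (components_eq_of_common comparable S C1 C2 (r C2) comparable_sym);
        [rewrite <- E' |]; apply Hr.
    + split; [|apply below_level_small].
      eapply inj_le_trans; [apply inj_le_sig | apply inj_le_equipotent, level_nodes_equipotent].
Qed.

Definition enumerates (C : T -> Prop) (psi : K -> T) : Prop :=
  (forall a, C (psi a)) /\ (forall a b, ltK a b <-> lt (psi a) (psi b)) /\
  (forall t, C t -> exists a, psi a = t).

Lemma enumeration_exists C :
  ord_iso {x | C x} (sub_rel lt C) K ltK -> exists psi, enumerates C psi.
Proof.
  intros [f [g [Hgf [Hfg Hord]]]]; exists (fun a => proj1_sig (g a)); split; [|split].
  - intros a; exact (proj2_sig (g a)).
  - intros a b; pose proof (Hord (g a) (g b)) as H; unfold sub_rel in H.
    rewrite !Hfg in H; split; apply H.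
  - intros t Ct; exists (f (exist _ t Ct)); rewrite Hgf; reflexivity.
Qed.

Lemma enumeration_inj C psi a b : enumerates C psi -> psi a = psi b -> a = b.
Proof.
  intros (_ & Hord & _) Eab.
  destruct (regular_trichotomy K ltK RK a b) as [H|[H|H]]; [exfalso | exact H | exfalso];
    apply Hord in H; rewrite Eab in H; exact (proj1 T_tree _ H).
Qed.

Lemma enumeration_on_level C psi a :
  is_branch lt C -> enumerates C psi -> on_level lt ltK a (psi a).
Proof.
  intros HC Hpsi; destruct Hpsi as (Hin & Hord & Hsurj).
  set (rho s := epsilon (regular_inhabited K ltK RK) (fun b => psi b = s)).
  assert (Hrho : forall s, lt s (psi a) -> psi (rho s) = s).
  { intros s Hs; apply epsilon_spec, Hsurj, (branch_down_closed lt C (psi a)); auto. }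
  apply on_level_of_level_map with rho; split; [|split; [|split]].
  - intros s Hs; apply Hord; rewrite Hrho; exact Hs.
  - intros k Hk; exists (psi k); split; [apply Hord, Hk|].
    apply (enumeration_inj C psi); [split; auto | apply Hrho, Hord, Hk].
  - intros s s' Hs Hs'; rewrite Hord, (Hrho s Hs), (Hrho s' Hs'); reflexivity.
  - intros s s' Hs Hs' E'; rewrite <- (Hrho s Hs), <- (Hrho s' Hs'), E'; reflexivity.
Qed.

(* An edge leaving the cone above [m] goes down, and below [m] is the separator. *)
Lemma path_avoiding_below_stays_above m u w :
  connected_in comparable (fun v => ~ lt (proj1_sig v) m) u w ->
  m = proj1_sig u \/ lt m (proj1_sig u) -> m = proj1_sig w \/ lt m (proj1_sig w).
Proof.
  destruct T_tree as (_ & Htr & Hwo).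
  intros Huw; induction Huw as [u w (_ & Hw & [Huw|Hwu])| |]; auto; intros [Hmu|Hmu].
  - right; rewrite Hmu; exact Huw.
  - right; eapply Htr; eauto.
  - exfalso; apply Hw; rewrite Hmu; exact Hwu.
  - destruct (proj1 (Hwo (proj1_sig u)) _ _ Hwu Hmu) as [H|[H|H]];
      [left; symmetry | contradiction | right]; exact H.
Qed.

Lemma branches_separated C D psi :
  is_branch lt C -> is_branch lt D -> enumerates C psi -> C <> D ->
  exists S : level_node -> Prop, card_lt {v | S v} K /\
    separates comparable S (fun v => exists a, proj1_sig v = psi a) (fun v => D (proj1_sig v)).
Proof.
  intros HC HD Hpsi HCD.
  assert (Hout : exists a, ~ D (psi a)).
  { apply NNPP; intros Hall; apply HCD.
    assert (HCD' : forall x, C x -> D x).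
    { intros x Cx; destruct (proj2 (proj2 Hpsi) x Cx) as [a <-].
      apply NNPP; intros Hn; apply Hall; exists a; exact Hn. }
    apply functional_extensionality; intros x; apply propositional_extensionality.
    split; [apply HCD' | apply (proj2 HC D (proj1 HD) HCD')]. }
  destruct (well_founded_minimal ltK (fun a => ~ D (psi a)) (regular_wf K ltK RK) Hout)
    as [a [Ha Hmin]].
  exists (fun v => lt (proj1_sig v) (psi a)); split.
  - destruct (level_map_of_on_level lt ltK _ _ (regular_inhabited K ltK RK)
                (enumeration_on_level C psi a HC Hpsi)) as [rho (Hin & _ & _ & Hinj)].
    apply (card_lt_mono _ _ {b | ltK b a}); [|apply segment_card_lt, RK].
    exists (fun v => exist (fun b => ltK b a) (rho (proj1_sig (proj1_sig v)))
                           (Hin _ (proj2_sig v))).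
    intros x y E'; apply proj1_sig_inj, proj1_sig_inj, Hinj;
      [exact (proj2_sig x) | exact (proj2_sig y) | exact (f_equal (@proj1_sig _ _) E')].
  - intros x y [b Hb] Sx Dy _ Hxy; apply Ha.
    assert (Hx : psi a = proj1_sig x \/ lt (psi a) (proj1_sig x)).
    { rewrite Hb; destruct (regular_trichotomy K ltK RK a b) as [H|[H|H]].
      - right; apply (proj1 (proj2 Hpsi)), H.
      - left; rewrite H; reflexivity.
      - exfalso; apply Sx; rewrite Hb; apply (proj1 (proj2 Hpsi)), H. }
    destruct (path_avoiding_below_stays_above _ _ _ Hxy Hx) as [Hy|Hy];
      [rewrite Hy; exact Dy | exact (branch_down_closed lt D _ _ T_tree HD Dy Hy)].
Qed.

Lemma comparable_kurepa_minor_family :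
  ~ inj_le {C : T -> Prop | is_branch lt C /\ ord_iso {x | C x} (sub_rel lt C) K ltK} K ->
  exists (I : Type) (F : I -> K -> level_node -> Prop),
    ~ inj_le I K /\ kurepa_minor_family K comparable I F.
Proof.
  intros Hbr.
  set (Br := {C : T -> Prop | is_branch lt C /\ ord_iso {x | C x} (sub_rel lt C) K ltK}).
  destruct (choice (fun (i : Br) psi => enumerates (proj1_sig i) psi)) as [Psi HPsi].
  { intros i; apply enumeration_exists, (proj2 (proj2_sig i)). }
  set (node i a := exist (fun t => exists a, on_level lt ltK a t) (Psi i a)
                     (ex_intro _ a (enumeration_on_level _ _ a (proj1 (proj2_sig i)) (HPsi i)))).
  exists Br, (fun i a v => proj1_sig v = Psi i a); split; [exact Hbr|]; split.
  - intros i; split; [|split; [|split]].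
    + intros a b Hab v [Ha Hb]; apply Hab, (enumeration_inj _ _ a b (HPsi i)); congruence.
    + intros a; exists (node i a); reflexivity.
    + intros a u v Hu Hv; replace v with u by (apply proj1_sig_inj; congruence).
      apply connected_in_refl.
    + intros a b Hab; exists (node i a), (node i b); split; [reflexivity | split; [reflexivity|]].
      destruct (regular_trichotomy K ltK RK a b) as [H|[H|H]]; [left | contradiction | right];
        apply (proj1 (proj2 (HPsi i))), H.
  - intros i j Hij.
    destruct (branches_separated (proj1_sig i) (proj1_sig j) (Psi i)) as [S [HS Hsep]];
      [apply (proj2_sig i) | apply (proj2_sig j) | apply HPsi
      | intros E'; apply Hij, proj1_sig_inj, E' |].
    exists S; split; [exact HS|]; intros x y Hx Sx [b Hb] Sy.
    apply Hsep; [exact Hx | exact Sx | rewrite Hb; apply (proj1 (HPsi j)) | exact Sy].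
Qed.

End ComparabilityGraph.

Lemma kurepa_tree_minor_graph K ltK T lt :
  regular_cardinal K ltK -> kurepa_tree K ltK T lt ->
  exists (V : Type) (E : V -> V -> Prop),
    simple_graph V E /\ equipotent V K /\ kl_connected K K V E /\
    exists (I : Type) (F : I -> K -> V -> Prop), ~ inj_le I K /\ kurepa_minor_family K E I F.
Proof.
  intros RK (Htree & Hne & _ & Hsmall & Hbr).
  exists (level_node K ltK T lt), (comparable K ltK T lt); split; [|split; [|split]].
  - apply comparable_simple, Htree.
  - apply level_nodes_equipotent; assumption.
  - apply comparable_kl_connected; assumption.
  - apply comparable_kurepa_minor_family; assumption.
Qed.

Section ComponentTree.

Variables (K : Type) (ltK : K -> K -> Prop) (V : Type) (E : V -> V -> Prop) (rank : V -> K).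
Hypothesis RK : regular_cardinal K ltK.
Hypothesis E_sym : forall u v, E u v -> E v u.
Hypothesis rank_inj : forall u v, rank u = rank v -> u = v.

Definition survives (a : K) (v : V) : Prop := ~ ltK (rank v) a.

Definition linked (a : K) : V -> V -> Prop := connected_in E (survives a).

Definition is_root (a : K) (v : V) : Prop :=
  survives a v /\ forall u, linked a v u -> ~ ltK (rank u) (rank v).

(* A node of level [a] is a component of [G] minus the vertices of rank below [a],
   represented by its vertex of least rank; the tree order is reverse inclusion. *)
Record comp_node : Type := CompNode {
  cn_level : K;
  cn_root : V;
  cn_rootP : is_root cn_level cn_root }.

Definition comp_lt (p q : comp_node) : Prop :=
  ltK (cn_level p) (cn_level q) /\ linked (cn_level p) (cn_root p) (cn_root q).

Lemma survives_antimono a b v : ltK a b -> survives b v -> survives a v.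
Proof. intros Hab Hb Ha; apply Hb; eapply regular_trans; eauto. Qed.

Lemma linked_antimono a b u w : ltK a b -> linked b u w -> linked a u w.
Proof. intros Hab; apply connected_in_mono; intros v; apply survives_antimono, Hab. Qed.

Lemma linked_sym a u w : linked a u w -> linked a w u.
Proof. apply connected_in_sym, E_sym. Qed.

Lemma is_root_exists a w : survives a w -> exists v, is_root a v /\ linked a v w.
Proof.
  intros Hw.
  destruct (well_founded_minimal ltK (fun k => exists u, linked a w u /\ rank u = k)
              (regular_wf K ltK RK)) as [m [[v [Hwv <-]] Hmin]].
  { exists (rank w), w; split; [apply connected_in_refl | reflexivity]. }
  exists v; split; [split|].
  - exact (connected_in_closed _ _ _ _ Hwv Hw).
  - intros u Hvu; apply Hmin; exists u; split; [eapply connected_in_trans; eauto | reflexivity].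
  - apply linked_sym, Hwv.
Qed.

Lemma is_root_unique a v v' : is_root a v -> is_root a v' -> linked a v v' -> v = v'.
Proof.
  intros [_ Hv] [_ Hv'] Hvv'; apply rank_inj.
  destruct (regular_trichotomy K ltK RK (rank v) (rank v')) as [H|[H|H]];
    [exfalso | exact H | exfalso].
  - exact (Hv' v (linked_sym _ _ _ Hvv') H).
  - exact (Hv v' Hvv' H).
Qed.

Lemma comp_node_eq p q : cn_level p = cn_level q -> cn_root p = cn_root q -> p = q.
Proof.
  destruct p as [a v Hp], q as [b w Hq]; simpl; intros -> ->.
  f_equal; apply proof_irrelevance.
Qed.

Lemma comp_lt_trans p q r : comp_lt p q -> comp_lt q r -> comp_lt p r.
Proof.
  intros [Hpq Lpq] [Hqr Lqr]; split; [eapply regular_trans; eauto|].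
  eapply connected_in_trans; [exact Lpq | apply (linked_antimono _ _ _ _ Hpq Lqr)].
Qed.

Lemma comp_lt_below_eq p q t :
  comp_lt p t -> comp_lt q t -> cn_level p = cn_level q -> p = q.
Proof.
  intros [_ Lp] [_ Lq] Hpq; apply comp_node_eq; [exact Hpq|].
  apply (is_root_unique (cn_level p)); [apply cn_rootP | rewrite Hpq; apply cn_rootP |].
  eapply connected_in_trans; [exact Lp | apply linked_sym; rewrite Hpq; exact Lq].
Qed.

Lemma comp_lt_below p q t :
  comp_lt p t -> comp_lt q t -> ltK (cn_level p) (cn_level q) -> comp_lt p q.
Proof.
  intros [_ Lp] [_ Lq] Hpq; split; [exact Hpq|].
  eapply connected_in_trans; [exact Lp | apply linked_sym, (linked_antimono _ _ _ _ Hpq Lq)].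
Qed.

Lemma comp_level_map t : level_map comp_lt ltK cn_level t (cn_level t).
Proof.
  split; [|split; [|split]].
  - intros s [Hs _]; exact Hs.
  - intros k Hk; destruct (is_root_exists k (cn_root t)) as [v [Hv Lv]].
    { apply (survives_antimono _ _ _ Hk), cn_rootP. }
    exists (CompNode k v Hv); split; [split|]; simpl; auto.
  - intros s s' Hs Hs'; split; [intros [H _]; exact H | apply comp_lt_below with t; assumption].
  - intros s s' Hs Hs'; apply comp_lt_below_eq with t; assumption.
Qed.

Lemma comp_on_level t a : on_level comp_lt ltK a t <-> a = cn_level t.
Proof.
  split.
  - intros Ha; apply (on_level_unique K ltK RK comp_lt t); [exact Ha|].
    apply on_level_of_level_map with cn_level, comp_level_map.
  - intros ->; apply on_level_of_level_map with cn_level, comp_level_map.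
Qed.

Lemma comp_is_tree : is_tree comp_node comp_lt.
Proof.
  split; [|split].
  - intros p [H _]; exact (regular_irrefl K ltK RK _ H).
  - exact comp_lt_trans.
  - intros t; split.
    + intros x y Hx Hy.
      destruct (regular_trichotomy K ltK RK (cn_level x) (cn_level y)) as [H|[H|H]].
      * right; left; apply comp_lt_below with t; assumption.
      * left; apply comp_lt_below_eq with t; assumption.
      * right; right; apply comp_lt_below with t; assumption.
    + intros Q HQ [x0 Hx0].
      destruct (well_founded_minimal ltK (fun k => exists p, Q p /\ cn_level p = k)
                  (regular_wf K ltK RK)) as [m [[p [Hp <-]] Hmin]]; [eauto|].
      exists p; split; [exact Hp|]; intros x Hx.
      destruct (regular_trichotomy K ltK RK (cn_level x) (cn_level p)) as [H|[H|H]].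
      * exfalso; apply (Hmin (cn_level x)); eauto.
      * left; apply comp_lt_below_eq with t; auto.
      * right; apply comp_lt_below with t; auto.
Qed.

Lemma rank_below_card_lt a : card_lt {v | ltK (rank v) a} K.
Proof.
  split.
  - exists (fun v => rank (proj1_sig v)); intros x y E'; apply proj1_sig_inj, rank_inj, E'.
  - apply (not_inj_le_mono _ _ {b | ltK b a}); [|apply segment_not_inj_le, RK].
    exists (fun v => exist (fun b => ltK b a) (rank (proj1_sig v)) (proj2_sig v)).
    intros x y E'; apply proj1_sig_inj, rank_inj; exact (f_equal (@proj1_sig _ _) E').
Qed.

Lemma comp_no_level_kappa t : ~ on_level_kappa comp_lt K ltK t.
Proof.
  intros [f [g [_ [Hfg _]]]].
  apply (segment_not_inj_le K ltK RK (cn_level t)).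
  destruct (comp_level_map t) as (Hin & _ & _ & Hinj).
  exists (fun k => exist (fun b => ltK b (cn_level t)) (cn_level (proj1_sig (g k)))
                         (Hin _ (proj2_sig (g k)))).
  intros x y E'; rewrite <- (Hfg x), <- (Hfg y); f_equal.
  apply proj1_sig_inj, Hinj; [apply (proj2_sig (g x)) | apply (proj2_sig (g y)) |].
  exact (f_equal (@proj1_sig _ _) E').
Qed.

Section KlConnected.

Hypothesis Hkl : kl_connected K K V E.

Lemma comp_level_nonempty a : exists t, on_level comp_lt ltK a t.
Proof.
  destruct (Hkl _ (rank_below_card_lt a)) as [[[C [v [Hv _]]]] _].
  destruct (is_root_exists a v Hv) as [r [Hr _]].
  exists (CompNode a r Hr); apply comp_on_level; reflexivity.
Qed.

Lemma comp_level_small a : card_lt {t | on_level comp_lt ltK a t} K.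
Proof.
  destruct (Hkl _ (rank_below_card_lt a)) as [_ Hcomp].
  apply (card_lt_mono _ _ (components E (fun v => ltK (rank v) a))); [|exact Hcomp].
  assert (Hroot : forall t : {t | on_level comp_lt ltK a t}, is_root a (cn_root (proj1_sig t))).
  { intros [t Ht]; simpl; apply comp_on_level in Ht; rewrite Ht; apply cn_rootP. }
  exists (fun t => exist (fun C => exists v, survives a v /\ C = _) _
                     (ex_intro _ (cn_root (proj1_sig t)) (conj (proj1 (Hroot t)) eq_refl))).
  intros [x Hx] [y Hy] Exy; apply (f_equal (@proj1_sig _ _)) in Exy; simpl in *.
  apply proj1_sig_inj; simpl; apply comp_on_level in Hx, Hy.
  assert (Lxy : survives a (cn_root y) /\ linked a (cn_root x) (cn_root y)).
  { refine (eq_ind_r (fun P : Prop => P) _ (f_equal (fun C : V -> Prop => C (cn_root y)) Exy)).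
    split; [rewrite Hy; apply cn_rootP | apply connected_in_refl]. }
  apply comp_node_eq; [congruence|].
  apply (is_root_unique a); [rewrite Hx; apply cn_rootP | rewrite Hy; apply cn_rootP | apply Lxy].
Qed.

End KlConnected.

Section MinorBranches.

Variables (I : Type) (F : I -> K -> V -> Prop).
Hypothesis HF : kurepa_minor_family K E I F.

Definition tail_set i a c : Prop := forall u, F i c u -> survives a u.

(* The branch sets are disjoint, so fewer than kappa of them meet the vertices
   of rank below [a]. *)
Lemma tail_set_exists i a : exists c, tail_set i a c.
Proof.
  apply NNPP; intros HN.
  assert (Hmeet : forall c, exists u, F i c u /\ ltK (rank u) a).
  { intros c; apply NNPP; intros Hc; apply HN; exists c; intros u Hu Hlt; apply Hc; eauto. }
  destruct (choice _ Hmeet) as [uc Huc].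
  apply (segment_not_inj_le K ltK RK a).
  exists (fun c => exist (fun b => ltK b a) (rank (uc c)) (proj2 (Huc c))).
  intros c c' Ec; apply NNPP; intros Hne.
  apply (proj1 (proj1 HF i) c c' Hne (uc c)); split; [apply Huc|].
  apply (f_equal (@proj1_sig _ _)), rank_inj in Ec; rewrite Ec; apply Huc.
Qed.

Lemma tail_sets_linked i a c c' u u' :
  tail_set i a c -> tail_set i a c' -> F i c u -> F i c' u' -> linked a u u'.
Proof.
  intros Hc Hc' Hu Hu'; destruct (proj1 HF i) as (_ & _ & Hconn & Hadj).
  destruct (classic (c = c')) as [<-|Hne].
  - eapply connected_in_mono; [exact Hc | apply Hconn; assumption].
  - destruct (Hadj c c' Hne) as [x [y (Hx & Hy & Hxy)]].
    eapply connected_in_trans; [eapply connected_in_mono; [exact Hc | apply (Hconn c u x Hu Hx)]|].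
    eapply connected_in_trans;
      [apply connected_in_edge; [apply Hc, Hx | apply Hc', Hy | exact Hxy]|].
    eapply connected_in_mono; [exact Hc' | apply Hconn; assumption].
Qed.

Definition minor_branch i (t : comp_node) : Prop :=
  exists c, tail_set i (cn_level t) c /\
            exists u, F i c u /\ linked (cn_level t) (cn_root t) u.

Lemma minor_branch_at i a : exists t, minor_branch i t /\ cn_level t = a.
Proof.
  destruct (tail_set_exists i a) as [c Hc].
  destruct (proj1 (proj2 (proj1 HF i)) c) as [u Hu].
  destruct (is_root_exists a u (Hc u Hu)) as [r [Hr Lr]].
  exists (CompNode a r Hr); split; [|reflexivity].
  exists c; split; [exact Hc | exists u; split; assumption].
Qed.

Lemma minor_branch_linked i t t' :
  minor_branch i t -> minor_branch i t' ->
  cn_level t = cn_level t' \/ ltK (cn_level t) (cn_level t') ->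
  linked (cn_level t) (cn_root t) (cn_root t').
Proof.
  intros [c [Hc [u [Hu Lu]]]] [c' [Hc' [u' [Hu' Lu']]]] Hle.
  assert (Hmono : forall v w, linked (cn_level t') v w -> linked (cn_level t) v w).
  { destruct Hle as [-> | Hlt]; [auto | intros v w; apply linked_antimono, Hlt]. }
  assert (Htail : tail_set i (cn_level t) c').
  { destruct Hle as [-> | Hlt]; [exact Hc' |].
    intros v Hv; apply (survives_antimono _ _ _ Hlt), Hc', Hv. }
  eapply connected_in_trans; [exact Lu|].
  eapply connected_in_trans; [apply (tail_sets_linked i _ c c'); eauto|].
  apply linked_sym, Hmono, Lu'.
Qed.

Lemma minor_branch_eq i t t' :
  minor_branch i t -> minor_branch i t' -> cn_level t = cn_level t' -> t = t'.
Proof.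
  intros Ht Ht' E'; apply comp_node_eq; [exact E'|].
  apply (is_root_unique (cn_level t)); [apply cn_rootP | rewrite E'; apply cn_rootP |].
  apply minor_branch_linked with i; auto.
Qed.

Lemma minor_branch_lt i t t' :
  minor_branch i t -> minor_branch i t' -> ltK (cn_level t) (cn_level t') -> comp_lt t t'.
Proof. intros Ht Ht' H; split; [exact H | apply minor_branch_linked with i; auto]. Qed.

Lemma minor_branch_is_branch i : is_branch comp_lt (minor_branch i).
Proof.
  assert (Hchain : is_chain comp_lt (minor_branch i)).
  { intros x y Hx Hy.
    destruct (regular_trichotomy K ltK RK (cn_level x) (cn_level y)) as [H|[H|H]].
    - right; left; apply minor_branch_lt with i; assumption.
    - left; apply minor_branch_eq with i; assumption.
    - right; right; apply minor_branch_lt with i; assumption. }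
  split; [exact Hchain|]; intros D HD Hsub x Hx.
  destruct (minor_branch_at i (cn_level x)) as [y [Hy Ey]].
  destruct (HD x y Hx (Hsub y Hy)) as [->|[[H _]|[H _]]]; [exact Hy | exfalso | exfalso];
    rewrite Ey in H; exact (regular_irrefl K ltK RK _ H).
Qed.

Lemma minor_branch_iso i :
  ord_iso {x | minor_branch i x} (sub_rel comp_lt (minor_branch i)) K ltK.
Proof.
  destruct (choice (fun a (y : {x | minor_branch i x}) => cn_level (proj1_sig y) = a)) as [g Hg].
  { intros a; destruct (minor_branch_at i a) as [t [Ht Et]]; exists (exist _ t Ht); exact Et. }
  exists (fun x => cn_level (proj1_sig x)), g; split; [|split].
  - intros x; apply proj1_sig_inj, (minor_branch_eq i);
      [apply (proj2_sig (g _)) | apply (proj2_sig x) | apply Hg].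
  - exact Hg.
  - intros x y; split; [intros [H _]; exact H|].
    apply (minor_branch_lt i); [apply (proj2_sig x) | apply (proj2_sig y)].
Qed.

(* At a level above the separator, the two minors live in different components. *)
Lemma minor_branch_separated i j : i <> j -> exists t, minor_branch i t /\ ~ minor_branch j t.
Proof.
  intros Hij; destruct (proj2 HF i j Hij) as [S [[_ HS] Hsep]].
  destruct (regular_bounded K ltK RK {v | S v} (fun v => rank (proj1_sig v)) HS) as [b Hb].
  destruct (minor_branch_at i b) as [t [Ht <-]]; exists t; split; [exact Ht|].
  destruct Ht as [c [Hc [u [Hu Lu]]]]; intros [c' [Hc' [u' [Hu' Lu']]]].
  assert (HSt : forall v, survives (cn_level t) v -> ~ S v)
    by (intros v Hv Sv; exact (Hv (Hb (exist _ v Sv)))).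
  apply (Hsep u u');
    [exists c; exact Hu | apply HSt, Hc, Hu | exists c'; exact Hu' | apply HSt, Hc', Hu' |].
  eapply connected_in_mono; [exact HSt|].
  eapply connected_in_trans; [apply linked_sym, Lu | exact Lu'].
Qed.

Lemma comp_tree_kurepa :
  kl_connected K K V E -> ~ inj_le I K -> kurepa_tree K ltK comp_node comp_lt.
Proof.
  intros Hkl HI; split; [exact comp_is_tree|]; split; [exact (comp_level_nonempty Hkl)|].
  split; [exact comp_no_level_kappa|]; split; [exact (comp_level_small Hkl)|].
  intros [h Hh]; apply HI.
  exists (fun i => h (exist _ (minor_branch i)
                             (conj (minor_branch_is_branch i) (minor_branch_iso i)))).
  intros i j Eij; apply Hh, (f_equal (@proj1_sig _ _)) in Eij; simpl in Eij.
  apply NNPP; intros Hne; destruct (minor_branch_separated i j Hne) as [t [Hi Hj]].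
  apply Hj; rewrite <- Eij; exact Hi.
Qed.

End MinorBranches.

End ComponentTree.

Lemma minor_graph_kurepa_tree K ltK V E I (F : I -> K -> V -> Prop) :
  regular_cardinal K ltK -> simple_graph V E -> equipotent V K -> kl_connected K K V E ->
  ~ inj_le I K -> kurepa_minor_family K E I F ->
  exists (T : Type) (lt : T -> T -> Prop), kurepa_tree K ltK T lt.
Proof.
  intros RK [E_sym _] [f [g [Hgf _]]] Hkl HI HF.
  assert (f_inj : forall u v, f u = f v -> u = v)
    by (intros u v E'; rewrite <- (Hgf u), <- (Hgf v), E'; reflexivity).
  exists (comp_node K ltK V E f), (comp_lt K ltK V E f).
  exact (comp_tree_kurepa K ltK V E f RK E_sym f_inj I F HF Hkl HI).
Qed.

Theorem mainTheorem12 (K : Type) (ltK : K -> K -> Prop) :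
  regular_cardinal K ltK ->
  ((exists (T : Type) (lt : T -> T -> Prop), kurepa_tree K ltK T lt) <->
   (exists (V : Type) (E : V -> V -> Prop),
      simple_graph V E /\ equipotent V K /\ kl_connected K K V E /\
      exists (I : Type) (F : I -> K -> V -> Prop),
        ~ inj_le I K /\ kurepa_minor_family K E I F)).
Proof.
  intros RK; split.
  - intros [T [lt HT]]; exact (kurepa_tree_minor_graph K ltK T lt RK HT).
  - intros [V [E (Hsimple & Hsize & Hkl & I & F & HI & HF)]].
    exact (minor_graph_kurepa_tree K ltK V E I F RK Hsimple Hsize Hkl HI HF).
Qed.
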